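(* Let $0\le\underline{\tau}<\overline{\tau}<\infty$, $\gamma\ge0$, let $f$ be a piecewise continuous probability density supported on $[\underline{\tau},\overline{\tau}]$, and let $\beta:[0,\infty)\to(0,\infty)$ be continuous and decreasing with $\lim_{x\to+\infty}\beta(x)=0$ and with $x\mapsto x\beta(x)$ Lipschitz. Assume $\delta=0$ and $$\int_{\underline{\tau}}^{\overline{\tau}}e^{-\gamma\tau}f(\tau)\,d\tau>\frac12,$$ and assume there exists $\overline{x}\ge0$ such that $x\mapsto x\beta(x)$ is decreasing on $[\overline{x},\infty)$. For $\mu\ge0$ let $x(t)$ be the unique continuous solution on $[0,\infty)$ of: $x(0)=\mu$; $$x'(t)=-\beta(x(t))x(t)+2\beta(\mu)\mu\int_{\underline{\tau}}^{\overline{\tau}}e^{-\gamma\tau}f(\tau)d\tau,\quad 0\le t\le\underline{\tau};$$ $$x'(t)=-\beta(x(t))x(t)+2\beta(\mu)\mu\int_t^{\overline{\tau}}e^{-\gamma\tau}f(\tau)d\tau+2\int_{\underline{\tau}}^{t}e^{-\gamma\tau}f(\tau)\beta(x(t-\tau))x(t-\tau)d\tau,\quad \underline{\tau}\le t\le\overline{\tau};$$ $$x'(t)=-\beta(x(t))x(t)+2\int_{\underline{\tau}}^{\overline{\tau}}e^{-\gamma\tau}f(\tau)\beta(x(t-\tau))x(t-\tau)d\tau,\quad t\ge\overline{\tau}.$$ If $\mu\ge\overline{x}$, then $\lim_{t\to+\infty}x(t)=+\infty$.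
   Context: This $x(t)$ is the total resting stem cell population in an age-structured hematopoiesis model (with resting-cell loss rate $\delta=0$, proliferating-cell apoptosis rate $\gamma$, entry rate $\beta(x)$ into proliferation, and division-time density $f$), where the initial resting population is $\mu$ and the initial proliferating age distribution is the one consistent with the model. *)

From Stdlib Require Import Reals Lra.
From Coquelicot Require Import Coquelicot.
Open Scope R_scope.

Definition piecewise_continuous_on (f : R -> R) (a b : R) : Prop :=
  exists (n : nat) (p : nat -> R),
    p 0%nat = a /\ p n = b /\
    (forall i, (i < n)%nat -> p i < p (S i)) /\
    (forall i, (i < n)%nat ->
       (forall s, p i < s < p (S i) -> continuous f s) /\
       (exists l : R, filterlim f (at_right (p i)) (locally l)) /\
       (exists l : R, filterlim f (at_left (p (S i))) (locally l))).

Definition pc_density_on (f : R -> R) (a b : R) : Prop :=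
  piecewise_continuous_on f a b /\
  (forall s, 0 <= f s) /\
  (forall s, (s < a \/ b < s) -> f s = 0) /\
  RInt f a b = 1.

Definition continuous_on_nonneg (g : R -> R) : Prop :=
  forall s, 0 <= s -> filterlim g (within (fun y => 0 <= y) (locally s)) (locally (g s)).

Definition rhs (beta f x : R -> R) (gamma tau_lo tau_hi mu t : R) : R :=
  if Rle_dec t tau_lo then
    - beta (x t) * x t
    + 2 * beta mu * mu * RInt (fun s => exp (- gamma * s) * f s) tau_lo tau_hi
  else if Rle_dec t tau_hi then
    - beta (x t) * x t
    + 2 * beta mu * mu * RInt (fun s => exp (- gamma * s) * f s) t tau_hi
    + 2 * RInt (fun s => exp (- gamma * s) * f s * beta (x (t - s)) * x (t - s)) tau_lo t
  else
    - beta (x t) * x t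
    + 2 * RInt (fun s => exp (- gamma * s) * f s * beta (x (t - s)) * x (t - s)) tau_lo tau_hi.

(* Write G(y) = y beta(y) and K = \int e^{-gamma s} f(s) ds > 1/2.  At a time c where
   x attains its running maximum and has stayed above mu >= xbar, every delayed value
   x(c - s) lies in [xbar, x(c)], where G is nonincreasing, so the equation gives
   x'(c) >= (2K - 1) G(x(c)) > 0; just after t = 0 the right-hand side is positive by
   continuity.  A supremum argument then shows that x is nondecreasing.  If x stayed
   below some M, then x' >= (2K - 1) G(M) > 0 throughout, which is absurd, so x tends
   to +oo. *)

From Stdlib Require Import Reals Lra Lia Classical.
From Coquelicot Require Import Coquelicot.
Open Scope R_scope.

Lemma ball_R (x e y : R) : ball x e y <-> Rabs (y - x) < e.
Proof. reflexivity. Qed.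

Lemma continuous_glue_right (F f : R -> R) (u v l : R) :
  u < v -> filterlim f (at_right u) (locally l) ->
  (forall y, y <= u -> F y = l) -> (forall y, u < y < v -> F y = f y) ->
  continuous F u.
Proof.
  intros Huv Hf Hleft Hmid P HP.
  rewrite (Hleft u (Rle_refl u)) in HP.
  destruct (Hf P HP) as [eps Heps].
  assert (Hd : 0 < Rmin eps (v - u)) by (apply Rmin_pos; [apply cond_pos | lra]).
  exists (mkposreal _ Hd); intros y Hy; rewrite ball_R in Hy; simpl in Hy.
  apply Rabs_def2 in Hy; pose proof (Rmin_l eps (v - u)); pose proof (Rmin_r eps (v - u)).
  destruct (Rle_dec y u) as [Hyu | Hyu].
  - rewrite Hleft by exact Hyu; exact (locally_singleton _ _ HP).
  - rewrite Hmid by lra; apply Heps; [rewrite ball_R; apply Rabs_def1 |]; lra.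
Qed.

Lemma continuous_glue_left (F f : R -> R) (u v l : R) :
  u < v -> filterlim f (at_left v) (locally l) ->
  (forall y, v <= y -> F y = l) -> (forall y, u < y < v -> F y = f y) ->
  continuous F v.
Proof.
  intros Huv Hf Hright Hmid P HP.
  rewrite (Hright v (Rle_refl v)) in HP.
  destruct (Hf P HP) as [eps Heps].
  assert (Hd : 0 < Rmin eps (v - u)) by (apply Rmin_pos; [apply cond_pos | lra]).
  exists (mkposreal _ Hd); intros y Hy; rewrite ball_R in Hy; simpl in Hy.
  apply Rabs_def2 in Hy; pose proof (Rmin_l eps (v - u)); pose proof (Rmin_r eps (v - u)).
  destruct (Rle_dec v y) as [Hvy | Hvy].
  - rewrite Hright by exact Hvy; exact (locally_singleton _ _ HP).
  - rewrite Hmid by lra; apply Heps; [rewrite ball_R; apply Rabs_def1 |]; lra.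
Qed.

(* On a piece, f agrees with a function that is continuous on the closed interval. *)
Lemma ex_RInt_piece_mul (f phi : R -> R) (u v : R) :
  u < v -> (forall s, u < s < v -> continuous f s) ->
  (exists l, filterlim f (at_right u) (locally l)) ->
  (exists l, filterlim f (at_left v) (locally l)) ->
  (forall z, continuous phi z) ->
  ex_RInt (fun s => f s * phi s) u v.
Proof.
  intros Huv Hf [l1 Hl1] [l2 Hl2] Hphi.
  set (F s := if Rle_dec s u then l1 else if Rle_dec v s then l2 else f s).
  assert (HFmid : forall y, u < y < v -> F y = f y).
  { intros y Hy; unfold F; destruct (Rle_dec y u); [lra |]; destruct (Rle_dec v y); [lra | easy]. }
  apply ex_RInt_ext with (fun s => F s * phi s).
  { rewrite Rmin_left, Rmax_right by lra; intros s Hs; rewrite HFmid by exact Hs; reflexivity. }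
  apply (@ex_RInt_continuous R_CompleteNormedModule).
  rewrite Rmin_left, Rmax_right by lra; intros z Hz.
  apply (continuous_mult F phi z); [| apply Hphi].
  destruct (Req_dec z u) as [-> | Hzu]; [| destruct (Req_dec z v) as [-> | Hzv]].
  - apply (continuous_glue_right F f u v l1); auto.
    intros y Hy; unfold F; destruct (Rle_dec y u); [easy | lra].
  - apply (continuous_glue_left F f u v l2); auto.
    intros y Hy; unfold F; destruct (Rle_dec y u); [lra |]; destruct (Rle_dec v y); [easy | lra].
  - assert (Hd : 0 < Rmin (z - u) (v - z)) by (apply Rmin_pos; lra).
    apply continuous_ext_loc with f; [| apply Hf; lra].
    exists (mkposreal _ Hd); intros y Hy; rewrite ball_R in Hy; simpl in Hy.
    apply Rabs_def2 in Hy.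
    pose proof (Rmin_l (z - u) (v - z)); pose proof (Rmin_r (z - u) (v - z)).
    symmetry; apply HFmid; lra.
Qed.

Lemma ex_RInt_pc_mul (f phi : R -> R) (a b : R) :
  piecewise_continuous_on f a b -> (forall z, continuous phi z) ->
  ex_RInt (fun s => f s * phi s) a b.
Proof.
  intros [n [p [<- [<- [Hinc Hpiece]]]]] Hphi.
  enough (H : forall k, (k <= n)%nat -> ex_RInt (fun s => f s * phi s) (p 0%nat) (p k))
    by (apply H; lia).
  induction k as [| k IHk]; intros Hk; [apply ex_RInt_point |].
  apply ex_RInt_Chasles with (p k); [apply IHk; lia |].
  destruct (Hpiece k) as [Hc [Hl Hr]]; [lia |].
  apply ex_RInt_piece_mul; auto; apply Hinc; lia.
Qed.

Definition extend0 (h : R -> R) (y : R) : R := h (Rmax y 0).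

Lemma extend0_nonneg (h : R -> R) (y : R) : 0 <= y -> extend0 h y = h y.
Proof. intros Hy; unfold extend0; rewrite Rmax_left by exact Hy; reflexivity. Qed.

Lemma continuous_extend0 (h : R -> R) :
  continuous_on_nonneg h -> forall z, continuous (extend0 h) z.
Proof.
  intros Hh z; unfold continuous, extend0.
  apply filterlim_comp
    with (f := fun y => Rmax y 0) (G := within (fun y => 0 <= y) (locally (Rmax z 0)));
    [| apply Hh, Rmax_r].
  intros P [eps HP]; exists eps; intros y Hy; apply HP; [| apply Rmax_r].
  rewrite ball_R in *; eapply Rle_lt_trans; [| exact Hy].
  unfold Rmax; destruct (Rle_dec y 0), (Rle_dec z 0); unfold Rabs;
    repeat destruct Rcase_abs; lra.
Qed.

Lemma MVT_open (g D : R -> R) (a b : R) : a < b ->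
  (forall c, a < c < b -> is_derive g c (D c)) ->
  (forall c, a <= c <= b -> continuous g c) ->
  exists c, a < c < b /\ g b - g a = D c * (b - a).
Proof.
  intros Hab HD Hc.
  pose (pr1 c (Hc' : a < c < b) := exist (fun l => derivable_pt_abs g c l) (D c)
     (proj1 (is_derive_Reals _ _ _) (HD c Hc'))).
  pose (pr2 c (_ : a < c < b) := derivable_pt_id c).
  destruct (MVT g id a b pr1 pr2 Hab) as [c [Hc' E]].
  - intros c Hc'; apply continuity_pt_filterlim, Hc, Hc'.
  - intros; apply derivable_continuous_pt, derivable_pt_id.
  - exists c; split; [exact Hc' |].
    unfold pr1, pr2 in E; simpl in E; rewrite derive_pt_id in E; unfold id in E; lra.
Qed.

Lemma is_derive_pos_increase (g : R -> R) (c l : R) : is_derive g c l -> 0 < l ->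
  exists d, 0 < d /\ forall h, 0 < h < d -> g c < g (c + h).
Proof.
  intros Hg Hl; apply is_derive_Reals in Hg.
  destruct (Hg (l / 2)) as [d Hd]; [lra |].
  exists d; split; [apply cond_pos |]; intros h Hh.
  assert (Hq : 0 < (g (c + h) - g c) / h).
  { specialize (Hd h ltac:(lra) ltac:(rewrite Rabs_pos_eq; lra)); apply Rabs_def2 in Hd; lra. }
  replace (g (c + h)) with (g c + (g (c + h) - g c) / h * h) by (field; lra).
  pose proof (Rmult_lt_0_compat _ h Hq ltac:(lra)); lra.
Qed.

Lemma continuous_pos_near (h : R -> R) (a : R) : continuous h a -> 0 < h a ->
  exists d, 0 < d /\ forall t, Rabs (t - a) < d -> 0 < h t.
Proof.
  intros Hh Ha.
  destruct (Hh (fun y => 0 < y) (open_gt 0 (h a) Ha)) as [d Hd].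
  exists d; split; [apply cond_pos | intros t Ht; apply Hd, Ht].
Qed.

Lemma continuous_ge_left (g : R -> R) (u T m : R) : u < T -> continuous g T ->
  (forall w, u < w < T -> m <= g w) -> m <= g T.
Proof.
  intros HuT Hg Hw; apply Rnot_lt_le; intros HT.
  destruct (continuous_pos_near (fun y => m - g y) T) as [d [Hd Hnear]];
    [apply (continuous_minus (fun _ => m) g); [apply continuous_const | exact Hg] | lra |].
  set (w := Rmax ((u + T) / 2) (T - d / 2)).
  assert (Hw1 : (u + T) / 2 <= w) by apply Rmax_l.
  assert (Hw2 : T - d / 2 <= w) by apply Rmax_r.
  assert (Hw3 : w < T) by (apply Rmax_lub_lt; lra).
  pose proof (Hw w ltac:(lra)); pose proof (Hnear w ltac:(apply Rabs_def1; lra)); lra.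
Qed.

Section RunningMaximum.

Variables g D : R -> R.
Hypothesis g_cont : forall t, continuous g t.
Hypothesis g_derive : forall t, 0 < t -> is_derive g t (D t).

Lemma MVT_nonneg (a b : R) : 0 <= a < b ->
  exists c, a < c < b /\ g b - g a = D c * (b - a).
Proof.
  intros Hab; apply MVT_open; [lra | intros c Hc; apply g_derive; lra | intros; apply g_cont].
Qed.

Hypothesis derive_pos_at_start : exists d, 0 < d /\ forall t, 0 < t < d -> 0 < D t.
Hypothesis derive_pos_at_running_max : forall c, 0 < c ->
  (forall u, 0 <= u <= c -> g 0 <= g u <= g c) -> 0 < D c.

Lemma increase_at_start : exists d, 0 < d /\ forall t, 0 < t < d -> g 0 < g t.
Proof.
  destruct derive_pos_at_start as [d [Hd HD]]; exists d; split; [exact Hd |].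
  intros t Ht; destruct (MVT_nonneg 0 t) as [c [Hc E]]; [lra |].
  pose proof (Rmult_lt_0_compat _ (t - 0) (HD c ltac:(lra)) ltac:(lra)); lra.
Qed.

(* If g is nondecreasing up to T and exceeds g T just after T, then g keeps
   attaining its running maximum: an earlier strict maximum would sit at a
   running maximum point c > T where D c > 0 pushes g above it. *)
Lemma running_max_beyond (T d : R) : 0 <= T ->
  (forall u v, 0 <= u <= v -> v <= T -> g u <= g v) ->
  (forall t, T < t < T + d -> g T < g t) ->
  forall v, T < v < T + d -> forall u, 0 <= u <= v -> g u <= g v.
Proof.
  intros HT Hmono Hpush v Hv u Hu.
  destruct (continuity_ab_maj g 0 v) as [c [Hmax Hc]];
    [lra | intros; apply continuity_pt_filterlim, g_cont |].
  enough (c = v) by (subst c; apply Hmax; exact Hu).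
  apply Rle_antisym; [apply Hc |]; apply Rnot_lt_le; intros Hcv.
  assert (HTc : T < c).
  { apply Rnot_le_lt; intros HcT.
    pose proof (Hmono c T ltac:(lra) (Rle_refl T)).
    pose proof (Hmax ((T + v) / 2) ltac:(lra)); pose proof (Hpush ((T + v) / 2) ltac:(lra)); lra. }
  assert (HDc : 0 < D c).
  { apply derive_pos_at_running_max; [lra |]; intros w Hw; split; [| apply Hmax; lra].
    destruct (Rle_dec w T); [apply Hmono; lra |].
    pose proof (Hmono 0 T ltac:(lra) (Rle_refl T)); pose proof (Hpush w ltac:(lra)); lra. }
  destruct (is_derive_pos_increase g c (D c) (g_derive c ltac:(lra)) HDc) as [e [He Hinc]].
  set (h := Rmin e (v - c) / 2).
  assert (Hh : 0 < Rmin e (v - c)) by (apply Rmin_pos; lra).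
  pose proof (Rmin_l e (v - c)); pose proof (Rmin_r e (v - c)).
  pose proof (Hinc h ltac:(unfold h; lra)); pose proof (Hmax (c + h) ltac:(unfold h; lra)); lra.
Qed.

Lemma nondecreasing_of_derive_pos_at_running_max :
  forall u v, 0 <= u <= v -> g u <= g v.
Proof.
  apply NNPP; intros Hnot.
  destruct (not_all_ex_not _ _ Hnot) as [u0 Hu0];
    destruct (not_all_ex_not _ _ Hu0) as [v0 Hv0].
  destruct (imply_to_and _ _ Hv0) as [Huv0 Hgv0]; apply Rnot_le_lt in Hgv0.
  set (S t := 0 <= t /\ forall u v, 0 <= u <= v -> v <= t -> g u <= g v).
  assert (HS0 : S 0) by (split; [lra | intros u v Huv Hv; replace u with v by lra; lra]).
  assert (HSb : bound S).
  { exists v0; intros t [Ht HSt]; apply Rnot_lt_le; intros Htv.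
    pose proof (HSt u0 v0 Huv0 ltac:(lra)); lra. }
  destruct (completeness S HSb (ex_intro _ 0 HS0)) as [T [HTub HTlub]].
  assert (HT : 0 <= T) by (apply HTub, HS0).
  assert (Hbefore : forall u v, 0 <= u <= v -> v < T -> g u <= g v).
  { intros u v Huv HvT; apply NNPP; intros Hn.
    enough (T <= v) by lra.
    apply HTlub; intros t [Ht HSt]; apply Rnot_lt_le; intros Hvt; apply Hn, HSt; lra. }
  assert (Hmono : forall u v, 0 <= u <= v -> v <= T -> g u <= g v).
  { intros u v Huv HvT; destruct (Rlt_dec v T); [apply Hbefore; lra |].
    replace v with T by lra; destruct (Req_dec u T) as [-> | HuT]; [lra |].
    apply (continuous_ge_left g u T); [lra | apply g_cont |].
    intros w Hw; apply Hbefore; lra. }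
  assert (Hpush : exists d, 0 < d /\ forall t, T < t < T + d -> g T < g t).
  { destruct (Req_dec T 0) as [-> | HT0].
    - destruct increase_at_start as [d [Hd Hinc]]; exists d; split; [exact Hd |].
      intros t Ht; apply Hinc; lra.
    - assert (HDT : 0 < D T).
      { apply derive_pos_at_running_max; [lra |]; intros u Hu; split; apply Hmono; lra. }
      destruct (is_derive_pos_increase g T (D T) (g_derive T ltac:(lra)) HDT) as [d [Hd Hinc]].
      exists d; split; [exact Hd |]; intros t Ht.
      replace t with (T + (t - T)) by ring; apply Hinc; lra. }
  destruct Hpush as [d [Hd Hpush]].
  assert (HSd : S (T + d / 2)).
  { split; [lra |]; intros u v Huv Hv.
    destruct (Rle_dec v T); [apply Hmono; lra |].
    apply (running_max_beyond T d); auto; lra. }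
  pose proof (HTub _ HSd); lra.
Qed.

Lemma is_lim_p_infty_of_derive_lower_bound :
  (forall M, (forall t, 0 <= t -> g t <= M) -> exists e, 0 < e /\ forall c, 0 < c -> e <= D c) ->
  is_lim g p_infty p_infty.
Proof.
  intros Hlow P [M HM].
  assert (Hex : exists t0, 0 <= t0 /\ M < g t0).
  { apply NNPP; intros Hn.
    assert (Hb : forall t, 0 <= t -> g t <= M).
    { intros t Ht; apply Rnot_lt_le; intros HMt; apply Hn; exists t; auto. }
    destruct (Hlow M Hb) as [e [He HD]].
    set (t1 := (M - g 0) / e + 1).
    assert (Ht1 : 0 < t1).
    { pose proof (Hb 0 (Rle_refl 0)); unfold t1.
      pose proof (Rdiv_le_0_compat (M - g 0) e ltac:(lra) He); lra. }
    destruct (MVT_nonneg 0 t1) as [c [Hc E]]; [lra |].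
    assert (e * (t1 - 0) <= D c * (t1 - 0)) by (apply Rmult_le_compat_r; [lra | apply HD; lra]).
    assert (e * (t1 - 0) = M - g 0 + e) by (unfold t1; field; lra).
    pose proof (Hb t1 ltac:(lra)); lra. }
  destruct Hex as [t0 [Ht0 Hgt0]]; exists t0; intros t Ht; apply HM.
  pose proof (nondecreasing_of_derive_pos_at_running_max t0 t ltac:(lra)); lra.
Qed.

End RunningMaximum.

Lemma continuous_RInt_lower (h : R -> R) (a b : R) :
  locally a (fun z => ex_RInt h z b) -> continuous (fun z => RInt h z b) a.
Proof.
  intros [e He].
  apply continuous_ext_loc with (fun z => opp (RInt h b z)).
  - exists e; intros z Hz; apply (opp_RInt_swap (V := R_CompleteNormedModule)).
    apply ex_RInt_swap, He, Hz.
  - apply (continuous_opp (V := R_CompleteNormedModule) (fun z => RInt h b z)).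
    apply (continuous_RInt_1 (V := R_CompleteNormedModule) h b a).
    exists e; intros z Hz; apply (RInt_correct (V := R_CompleteNormedModule)).
    apply ex_RInt_swap, He, Hz.
Qed.

Section DelayEquation.

Variables (tau_lo tau_hi gamma mu xbar : R) (f beta x : R -> R).

Local Notation ef := (fun s => exp (- gamma * s) * f s).
Local Notation K := (RInt ef tau_lo tau_hi).
Local Notation delay c := (fun s => exp (- gamma * s) * f s * beta (x (c - s)) * x (c - s)).
Local Notation rhs_x := (rhs beta f x gamma tau_lo tau_hi mu).

Hypothesis lo_ge0 : 0 <= tau_lo.
Hypothesis lo_lt_hi : tau_lo < tau_hi.
Hypothesis f_pc : piecewise_continuous_on f tau_lo tau_hi.
Hypothesis f_ge0 : forall s, 0 <= f s.
Hypothesis f_out : forall s, s < tau_lo \/ tau_hi < s -> f s = 0.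
Hypothesis beta_pos : forall s, 0 <= s -> 0 < beta s.
Hypothesis beta_cont : continuous_on_nonneg beta.
Hypothesis x_cont : continuous_on_nonneg x.
Hypothesis mu_pos : 0 < mu.
Hypothesis K_gt_half : K > 1 / 2.

Lemma ef_ge0 (s : R) : 0 <= exp (- gamma * s) * f s.
Proof. apply Rmult_le_pos; [left; apply exp_pos | apply f_ge0]. Qed.

Lemma ex_RInt_ef (a b : R) : tau_lo <= a <= b -> b <= tau_hi -> ex_RInt ef a b.
Proof.
  intros Ha Hb.
  assert (H : ex_RInt ef tau_lo tau_hi).
  { apply ex_RInt_ext with (fun s => f s * exp (- gamma * s)); [intros; apply Rmult_comm |].
    apply ex_RInt_pc_mul; [exact f_pc |].
    intros z; apply (ex_derive_continuous (V := R_NormedModule)); auto_derive; easy. }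
  apply (ex_RInt_Chasles_2 (V := R_CompleteNormedModule)) with tau_lo; [lra |].
  apply (ex_RInt_Chasles_1 (V := R_CompleteNormedModule)) with tau_hi; [lra | exact H].
Qed.

Lemma RInt_ef_from_below (a : R) : a <= tau_lo -> ex_RInt ef a tau_hi /\ RInt ef a tau_hi = K.
Proof.
  intros Ha.
  assert (Hzero : forall s, Rmin a tau_lo < s < Rmax a tau_lo -> 0 = exp (- gamma * s) * f s).
  { rewrite Rmin_left, Rmax_right by lra; intros s Hs; rewrite f_out by lra; ring. }
  assert (Hex0 : ex_RInt ef a tau_lo)
    by (apply ex_RInt_ext with (fun _ => 0); [exact Hzero | apply ex_RInt_const]).
  assert (Hex1 : ex_RInt ef tau_lo tau_hi) by (apply ex_RInt_ef; lra).
  split; [apply (ex_RInt_Chasles (V := R_CompleteNormedModule)) with tau_lo; assumption |].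
  rewrite <- (RInt_Chasles (V := R_CompleteNormedModule) _ a tau_lo tau_hi Hex0 Hex1).
  rewrite <- (RInt_ext _ _ _ _ Hzero), RInt_const.
  unfold plus, scal; simpl; unfold mult; simpl; ring.
Qed.

Lemma ex_RInt_ef_to_hi (a : R) : a <= tau_hi -> ex_RInt ef a tau_hi.
Proof.
  intros Ha; destruct (Rle_dec a tau_lo).
  - apply RInt_ef_from_below; assumption.
  - apply ex_RInt_ef; lra.
Qed.

Lemma ex_RInt_delay (c b : R) : tau_lo <= b <= tau_hi -> b <= c ->
  (forall u, 0 <= u <= c -> 0 <= x u) -> ex_RInt (delay c) tau_lo b.
Proof.
  intros Hb Hbc Hx.
  set (xx := extend0 x); set (bb := extend0 beta).
  assert (H : ex_RInt (fun s => f s * (exp (- gamma * s) * (bb (xx (c - s)) * xx (c - s))))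
                tau_lo tau_hi).
  { apply ex_RInt_pc_mul; [exact f_pc |]; intros z.
    assert (Hxx : continuous (fun s => xx (c - s)) z).
    { apply (continuous_comp (fun s => c - s) xx); [| apply continuous_extend0, x_cont].
      apply (ex_derive_continuous (V := R_NormedModule)); auto_derive; easy. }
    apply (continuous_mult (fun s => exp (- gamma * s))).
    - apply (ex_derive_continuous (V := R_NormedModule)); auto_derive; easy.
    - apply (continuous_mult (fun s => bb (xx (c - s)))); [| exact Hxx].
      apply (continuous_comp (fun s => xx (c - s)) bb); [exact Hxx |].
      apply continuous_extend0, beta_cont. }
  apply ex_RInt_ext with (fun s => f s * (exp (- gamma * s) * (bb (xx (c - s)) * xx (c - s)))).
  { rewrite Rmin_left, Rmax_right by lra; intros s Hs; unfold xx, bb.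
    rewrite (extend0_nonneg x) by lra; rewrite (extend0_nonneg beta) by (apply Hx; lra).
    simpl; ring. }
  apply (ex_RInt_Chasles_1 (V := R_CompleteNormedModule)) with tau_hi; [lra | exact H].
Qed.

Hypothesis G_noninc : forall s1 s2, xbar <= s1 -> s1 <= s2 -> s2 * beta s2 <= s1 * beta s1.
Hypothesis xbar_le_mu : xbar <= mu.

Section RunningMaximumAt.

Variable c : R.
Hypothesis c_pos : 0 < c.
Hypothesis x_running_max : forall u, 0 <= u <= c -> mu <= x u <= x c.

Lemma RInt_delay_ge (b : R) : tau_lo <= b <= tau_hi -> b <= c ->
  x c * beta (x c) * RInt ef tau_lo b <= RInt (delay c) tau_lo b.
Proof.
  intros Hb Hbc.
  assert (Hex : ex_RInt ef tau_lo b) by (apply ex_RInt_ef; lra).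
  replace (x c * beta (x c) * RInt ef tau_lo b)
    with (RInt (fun s => x c * beta (x c) * (exp (- gamma * s) * f s)) tau_lo b)
    by (exact (RInt_scal (V := R_CompleteNormedModule) _ _ _ _ Hex)).
  apply RInt_le; [lra | apply (ex_RInt_scal (V := R_NormedModule)), Hex | |].
  - apply ex_RInt_delay; [lra | lra |]; intros u Hu; pose proof (x_running_max u Hu); lra.
  - intros s Hs; pose proof (x_running_max (c - s) ltac:(lra)).
    pose proof (G_noninc (x (c - s)) (x c) ltac:(lra) ltac:(lra)).
    pose proof (ef_ge0 s); nra.
Qed.

Lemma rhs_ge_running_max : (2 * K - 1) * (x c * beta (x c)) <= rhs_x c.
Proof.
  assert (HK : 1 / 2 < K) by exact K_gt_half.
  assert (HG : x c * beta (x c) <= mu * beta mu).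
  { pose proof (x_running_max c ltac:(lra)); apply G_noninc; lra. }
  unfold rhs; destruct (Rle_dec c tau_lo) as [Hlo | Hlo]; [nra |].
  destruct (Rle_dec c tau_hi) as [Hhi | Hhi].
  - assert (Hex1 : ex_RInt ef tau_lo c) by (apply ex_RInt_ef; lra).
    assert (Hex2 : ex_RInt ef c tau_hi) by (apply ex_RInt_ef; lra).
    assert (Hsplit : RInt ef tau_lo c + RInt ef c tau_hi = K)
      by exact (RInt_Chasles (V := R_CompleteNormedModule) _ _ _ _ Hex1 Hex2).
    assert (Htail : 0 <= RInt ef c tau_hi)
      by (apply RInt_ge_0; [lra | exact Hex2 | intros; apply ef_ge0]).
    pose proof (RInt_delay_ge c ltac:(lra) (Rle_refl c)); nra.
  - pose proof (RInt_delay_ge tau_hi ltac:(lra) ltac:(lra)); nra.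
Qed.

End RunningMaximumAt.

Lemma rhs_pos_at_running_max (c : R) : 0 < c ->
  (forall u, 0 <= u <= c -> mu <= x u <= x c) -> 0 < rhs_x c.
Proof.
  intros Hc Hrun; eapply Rlt_le_trans; [| apply (rhs_ge_running_max c Hc Hrun)].
  pose proof (Hrun c ltac:(lra)); pose proof (beta_pos (x c) ltac:(lra)).
  assert (HK : 1 / 2 < K) by exact K_gt_half.
  apply Rmult_lt_0_compat; [lra | apply Rmult_lt_0_compat; lra].
Qed.

Hypothesis x_init : x 0 = mu.

Lemma rhs_ge_of_bounded (M c : R) : 0 < c ->
  (forall u v, 0 <= u <= v -> x u <= x v) -> (forall t, 0 <= t -> x t <= M) ->
  (2 * K - 1) * (M * beta M) <= rhs_x c.
Proof.
  intros Hc Hmono HM.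
  assert (Hrun : forall u, 0 <= u <= c -> mu <= x u <= x c).
  { intros u Hu; rewrite <- x_init; split; apply Hmono; lra. }
  eapply Rle_trans; [| apply (rhs_ge_running_max c Hc Hrun)].
  pose proof (Hrun c ltac:(lra)); pose proof (HM c ltac:(lra)).
  pose proof (G_noninc (x c) M ltac:(lra) ltac:(lra)).
  assert (HK : 1 / 2 < K) by exact K_gt_half; nra.
Qed.

Lemma rhs_ge_near_start (t : R) : 0 < t <= tau_hi -> (forall u, 0 <= u <= t -> 0 <= x u) ->
  - beta (x t) * x t + 2 * beta mu * mu * RInt ef t tau_hi <= rhs_x t.
Proof.
  intros Ht Hx; unfold rhs; destruct (Rle_dec t tau_lo) as [Hlo | Hlo].
  - rewrite (proj2 (RInt_ef_from_below t Hlo)); lra.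
  - destruct (Rle_dec t tau_hi) as [_ | Hhi]; [| lra].
    assert (0 <= RInt (delay t) tau_lo t); [| lra].
    apply RInt_ge_0; [lra | apply ex_RInt_delay; [lra | lra | exact Hx] |].
    intros s Hs; pose proof (Hx (t - s) ltac:(lra)); pose proof (beta_pos (x (t - s)) ltac:(lra)).
    pose proof (ef_ge0 s); apply Rmult_le_pos; [apply Rmult_le_pos |]; lra.
Qed.

(* Near t = 0 the lower bound of rhs_ge_near_start tends to (2K - 1) mu beta(mu) > 0. *)
Lemma rhs_pos_near_start : exists d, 0 < d /\ forall t, 0 < t < d -> 0 < rhs_x t.
Proof.
  set (xx := extend0 x).
  set (lower t := 2 * beta mu * mu * RInt ef t tau_hi - extend0 beta (xx t) * xx t).
  assert (Hxx : forall z, continuous xx z) by (apply continuous_extend0, x_cont).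
  assert (Hlower : continuous lower 0).
  { apply (continuous_minus (fun t => 2 * beta mu * mu * RInt ef t tau_hi)).
    - apply (continuous_mult (fun _ => 2 * beta mu * mu)); [apply continuous_const |].
      apply continuous_RInt_lower.
      exists (mkposreal tau_hi ltac:(lra)); intros z Hz; rewrite ball_R in Hz; simpl in Hz.
      apply ex_RInt_ef_to_hi; apply Rabs_def2 in Hz; lra.
    - apply (continuous_mult (fun t => extend0 beta (xx t)) xx); [| apply Hxx].
      apply (continuous_comp xx); [apply Hxx | apply continuous_extend0, beta_cont]. }
  assert (Hlower0 : 0 < lower 0).
  { unfold lower, xx; rewrite (proj2 (RInt_ef_from_below 0 lo_ge0)).
    rewrite (extend0_nonneg x 0), x_init, (extend0_nonneg beta mu) by lra.
    assert (HK : 1 / 2 < K) by exact K_gt_half.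
    pose proof (Rmult_lt_0_compat _ _ (beta_pos mu ltac:(lra)) mu_pos); nra. }
  destruct (continuous_pos_near lower 0 Hlower Hlower0) as [d1 [Hd1 Hpos1]].
  destruct (continuous_pos_near xx 0 (Hxx 0)) as [d2 [Hd2 Hpos2]];
    [unfold xx; rewrite extend0_nonneg, x_init; lra |].
  exists (Rmin (Rmin d1 d2) tau_hi); split; [repeat apply Rmin_pos; lra |].
  intros t Ht; pose proof (Rmin_l (Rmin d1 d2) tau_hi); pose proof (Rmin_r (Rmin d1 d2) tau_hi).
  pose proof (Rmin_l d1 d2); pose proof (Rmin_r d1 d2).
  assert (Hx : forall u, 0 <= u <= t -> 0 <= x u).
  { intros u Hu; rewrite <- (extend0_nonneg x u) by lra; left; apply Hpos2.
    rewrite Rminus_0_r, Rabs_pos_eq; lra. }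
  assert (Hlower_t : lower t = - beta (x t) * x t + 2 * beta mu * mu * RInt ef t tau_hi).
  { unfold lower, xx.
    rewrite (extend0_nonneg x t), (extend0_nonneg beta (x t)) by (try apply Hx; lra).
    ring. }
  pose proof (rhs_ge_near_start t ltac:(lra) Hx).
  pose proof (Hpos1 t ltac:(rewrite Rminus_0_r, Rabs_pos_eq; lra)); lra.
Qed.

Hypothesis x_derive : forall t, 0 < t -> is_derive x t (rhs_x t).

Lemma extend0_solution_diverges : is_lim (extend0 x) p_infty p_infty.
Proof.
  assert (Hderive : forall t, 0 < t -> is_derive (extend0 x) t (rhs_x t)).
  { intros t Ht; apply is_derive_ext_loc with x; [| apply x_derive, Ht].
    exists (mkposreal t Ht); intros y Hy; rewrite ball_R in Hy; simpl in Hy.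
    apply Rabs_def2 in Hy; symmetry; apply extend0_nonneg; lra. }
  assert (Hrun : forall c, 0 < c ->
            (forall u, 0 <= u <= c -> extend0 x 0 <= extend0 x u <= extend0 x c) -> 0 < rhs_x c).
  { intros c Hc Hu; apply rhs_pos_at_running_max; [exact Hc |]; intros u Hu'.
    specialize (Hu u Hu'); rewrite !extend0_nonneg, x_init in Hu by lra; exact Hu. }
  assert (Hmono : forall u v, 0 <= u <= v -> x u <= x v).
  { intros u v Huv; rewrite <- (extend0_nonneg x u), <- (extend0_nonneg x v) by lra.
    apply (nondecreasing_of_derive_pos_at_running_max _ rhs_x); [| exact Hderive |
      exact rhs_pos_near_start | exact Hrun | lra]; apply continuous_extend0, x_cont. }
  apply (is_lim_p_infty_of_derive_lower_bound _ rhs_x);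
    [apply continuous_extend0, x_cont | exact Hderive | exact rhs_pos_near_start | exact Hrun |].
  intros M HM; exists ((2 * K - 1) * (M * beta M)); split.
  - pose proof (HM 0 (Rle_refl 0)); rewrite extend0_nonneg, x_init in * by lra.
    assert (HK : 1 / 2 < K) by exact K_gt_half.
    pose proof (beta_pos M ltac:(lra)); apply Rmult_lt_0_compat; nra.
  - intros c Hc; apply rhs_ge_of_bounded; [exact Hc | exact Hmono |].
    intros t Ht; rewrite <- (extend0_nonneg x t) by exact Ht; apply HM, Ht.
Qed.

End DelayEquation.

Theorem proposition2p3
  (tau_lo tau_hi gamma : R) (f beta : R -> R) (xbar mu : R) (x : R -> R) :
  0 <= tau_lo -> tau_lo < tau_hi -> 0 <= gamma ->
  pc_density_on f tau_lo tau_hi ->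
  (forall s, 0 <= s -> 0 < beta s) ->
  continuous_on_nonneg beta ->
  (forall s1 s2, 0 <= s1 -> s1 <= s2 -> beta s2 <= beta s1) ->
  is_lim beta p_infty 0 ->
  (exists L : R, forall s1 s2, 0 <= s1 -> 0 <= s2 ->
      Rabs (s1 * beta s1 - s2 * beta s2) <= L * Rabs (s1 - s2)) ->
  RInt (fun s => exp (- gamma * s) * f s) tau_lo tau_hi > 1 / 2 ->
  0 <= xbar ->
  (forall s1 s2, xbar <= s1 -> s1 <= s2 -> s2 * beta s2 <= s1 * beta s1) ->
  0 <= mu ->
  x 0 = mu ->
  continuous_on_nonneg x ->
  (forall t, 0 < t -> is_derive x t (rhs beta f x gamma tau_lo tau_hi mu t)) ->
  mu >= xbar ->
  is_lim x p_infty p_infty.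
Proof.
  intros Hlo Hlohi _ [Hpc [Hf0 [Hout _]]] Hbpos Hbcont _ _ _ HK Hxbar HG _ Hx0 Hxcont Hder Hmu.
  (* y beta(y) > 0 = 0 beta(0) for y > 0, so the threshold xbar cannot be 0. *)
  assert (Hxbar_pos : 0 < xbar).
  { destruct Hxbar as [| <-]; [easy |].
    pose proof (HG 0 1 ltac:(lra) ltac:(lra)); pose proof (Hbpos 1 ltac:(lra)); lra. }
  apply is_lim_ext_loc with (extend0 x).
  - exists 0; intros t Ht; apply extend0_nonneg; lra.
  - apply (extend0_solution_diverges tau_lo tau_hi gamma mu xbar f beta x); auto; lra.
Qed.
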